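(* Let $m,n\ge1$, let $f(X)=\sum_{i=0}^{mn}a_iX^i\in\mathbb{F}_2[X]$ have degree $mn$, let $C_0,\dots,C_{n-1}$ be the matrices associated with $f$ as in the context, and let $T\in M_{mn}(\mathbb{F}_2)$ be the block matrix $$T=\begin{pmatrix}\mathbf 0& I_m&\mathbf 0&\cdots&\mathbf 0\\ \mathbf 0&\mathbf 0&I_m&\cdots&\mathbf 0\\ \vdots&&&\ddots&\vdots\\ \mathbf 0&\mathbf 0&\mathbf 0&\cdots&I_m\\ C_0&C_1&C_2&\cdots&C_{n-1}\end{pmatrix}$$ with $m\times m$ blocks. Then the characteristic polynomial $\det(XI_{mn}-T)$ of $T$ equals $f(X)$. Consequently, if $f$ is primitive over $\mathbb{F}_2$, then $T$ is invertible and its multiplicative order is $2^{mn}-1$.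
   Context: For $x=(x_1,\dots,x_m)^T\in\mathbb{F}_2^m$, the right shift $R\in M_m(\mathbb{F}_2)$ is given by $Rx=(0,x_1,\dots,x_{m-1})^T$. Given $f(X)=\sum_{i=0}^{mn}a_iX^i\in\mathbb{F}_2[X]$ of degree $mn$, define for $0\le i\le n-1$ the column vector $\mathbf v_i=(a_i,a_{n+i},a_{2n+i},\dots,a_{(m-1)n+i})^T\in\mathbb{F}_2^m$. For $1\le i\le n-1$, $C_i\in M_m(\mathbb{F}_2)$ is the matrix whose first $m-1$ columns are zero and whose last column is $\mathbf v_i$; and $C_0=R+\widehat C_0$, where $\widehat C_0$ has first $m-1$ columns zero and last column $\mathbf v_0$. $\mathbf 0$ denotes the $m\times m$ zero matrix. *)

From HB Require Import structures.
From mathcomp Require Import all_boot all_order all_algebra.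
Set Implicit Arguments. Unset Strict Implicit. Unset Printing Implicit Defensive.
Import GRing.Theory.
Local Open Scope ring_scope.

Definition Rshift (m : nat) : 'M['F_2]_m :=
  \matrix_(r < m, c < m) ((nat_of_ord r == (nat_of_ord c).+1)%N)%:R.

Definition vvec (f : {poly 'F_2}) (m n i : nat) : 'cV['F_2]_m :=
  \col_(r < m) f`_(r * n + i).

Definition Chat (f : {poly 'F_2}) (m n i : nat) : 'M['F_2]_m :=
  \matrix_(r < m, c < m) (if nat_of_ord c == m.-1 then vvec f m n i r ord0 else 0).

Definition Cmat (f : {poly 'F_2}) (m n i : nat) : 'M['F_2]_m :=
  if i == 0%N then Rshift m + Chat f m n i else Chat f m n i.

Lemma sum_const_m (m n : nat) : (\sum_(i < n) m = m * n)%N.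
Proof. by rewrite big_const_ord iter_addn_0 mulnC. Qed.

Definition Tblock (f : {poly 'F_2}) (m n : nat) : 'M['F_2]_(\sum_(i < n) m) :=
  \mxblock_(i < n, j < n)
     (if (i.+1 < n)%N then (if nat_of_ord j == i.+1 then 1%:M else 0)
      else Cmat f m n j).

Definition Tmat (f : {poly 'F_2}) (m n : nat) : 'M['F_2]_(m * n) :=
  castmx (sum_const_m m n, sum_const_m m n) (Tblock f m n).

Definition poly_order_is (f : {poly 'F_2}) (e : nat) : Prop :=
  (0 < e)%N /\ (f %| 'X^e - 1) /\
  (forall e', (0 < e')%N -> f %| 'X^e' - 1 -> (e <= e')%N).

Definition primitive_poly (f : {poly 'F_2}) : Prop :=
  irreducible_poly f /\ f.[0] != 0 /\
  poly_order_is f (2 ^ (size f).-1 - 1)%N.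

From HB Require Import structures.
From mathcomp Require Import all_boot all_order all_algebra.
Set Implicit Arguments. Unset Strict Implicit. Unset Printing Implicit Defensive.
Import GRing.Theory.
Local Open Scope ring_scope.

(* Multiplying X I - T on the right by the matrix E that adds X^i times block
   column i to the last block column clears the last block column outside the last
   block row, where it becomes Q := X^n I - sum_j X^j C_j.  The remaining top-left
   (n-1)m corner is triangular with diagonal X, and det E = X^((n-1)m) too, so
   det (X I - T) = det Q.  For the given C_j, Q^T is X^n I minus the companion
   matrix of Y^m - sum_c w_c Y^c with w_c = sum_j a_(cn+j) X^j, hence
   det Q = X^(mn) - sum_(k < mn) a_k X^k, which is f in characteristic 2.
   As f is irreducible it is the minimal polynomial of T, so T^k = 1 iff f divides
   X^k - 1, and the order of T is that of f. *)

Lemma big_nat_mul_blocks (V : nmodType) a b (F : nat -> V) :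
  \sum_(0 <= k < a * b) F k = \sum_(0 <= i < b) \sum_(0 <= j < a) F (i * a + j)%N.
Proof.
rewrite mulnC; elim: b => [|b IH]; first by rewrite mul0n !big_geq.
rewrite mulSnr big_nat_recr //= -IH.
rewrite (@big_cat_nat _ _ _ (b * a) 0 (b * a + a) _ _ (leq0n _) (leq_addr _ _)) /=.
by congr (_ + _); rewrite (big_addn 0 _ (b * a)) addKn; apply: eq_bigr => j _; rewrite addnC.
Qed.

Lemma big_nat_mulrn_eq (V : nmodType) a i0 (b : bool) (F : nat -> V) : (i0 < a)%N ->
  \sum_(0 <= i < a) F i *+ ((i == i0) && b) = F i0 *+ b.
Proof.
move=> i0a; rewrite (eq_bigr (fun i => if i == i0 then F i *+ b else 0)).
  by rewrite -big_mkcond big_nat1_eq i0a.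
by move=> i _; case: eqP.
Qed.

Lemma divnMDl_small m i c : (c < m)%N -> ((i * m + c) %/ m = i)%N.
Proof. by move=> cm; rewrite divnMDl ?divn_small ?addn0 //; apply: leq_ltn_trans cm. Qed.

Lemma modnMDl_small m i c : (c < m)%N -> ((i * m + c) %% m = c)%N.
Proof. by move=> cm; rewrite modnMDl modn_small. Qed.

Lemma tagnat_divmod n m (s : 'I_(\sum_(i < n) m)) : (0 < m)%N ->
  (tagnat.sig1 s : nat) = (s %/ m)%N /\ (tagnat.sig2 s : nat) = (s %% m)%N.
Proof.
move=> m_gt0; have -> : (s : nat) = (tagnat.sig1 s * m + tagnat.sig2 s)%N.
  by rewrite tagnat.rect -(big_ord_widen _ (fun _ => m) (ltnW (ltn_ord _))) sum_const_m mulnC.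
by rewrite divnMDl_small ?modnMDl_small.
Qed.

Lemma eqn_block m k i c : (c < m)%N -> (k == i * m + c)%N = (i == k %/ m)%N && (c == k %% m)%N.
Proof.
move=> cm; apply/eqP/andP => [->|[/eqP -> /eqP ->]]; last by rewrite -divn_eq.
by rewrite divnMDl_small ?modnMDl_small.
Qed.

Lemma det_castmx (R : comNzRingType) a b (e : a = b) (A : 'M[R]_a) :
  \det (castmx (e, e) A) = \det A.
Proof. by case: b / e; rewrite castmx_id. Qed.

Lemma det_sub_companionmx (R : comNzRingType) (p : {poly R}) (y : R) :
  p \is monic -> \det (y%:M - companionmx p) = p.[y].
Proof.
move=> p_monic; rewrite -[in RHS](companionmxK p_monic) -horner_evalE -det_map_mx.
congr (\det _); apply/matrixP => i j.
by rewrite !mxE rmorphB rmorphMn /= horner_evalE hornerX horner_evalE hornerC.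
Qed.

Section Chunks.
Variables (R : comNzRingType) (f : {poly R}) (m n : nat).

(* [chunk_poly c] collects the c-th entries of the vectors v_0, ..., v_(n-1). *)
Definition chunk_poly (c : nat) : {poly R} := \sum_(j < n) (f`_(c * n + j))%:P * 'X^j.

Definition chunked_poly : {poly {poly R}} := 'X^m - \poly_(c < m) chunk_poly c.

Lemma coef_chunked_poly c : (c < m)%N -> chunked_poly`_c = - chunk_poly c.
Proof. by move=> cm; rewrite coefB coefXn coef_poly cm (ltn_eqF cm) sub0r. Qed.

Lemma size_chunked_poly : size chunked_poly = m.+1.
Proof. by rewrite size_polyDl size_polyXn // size_polyN ltnS size_poly. Qed.

Lemma chunked_poly_monic : chunked_poly \is monic.
Proof.
by rewrite monicE lead_coefDl ?lead_coefXn // size_polyXn size_polyN ltnS size_poly.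
Qed.

Lemma horner_chunked_poly :
  chunked_poly.['X^n] = 'X^(m * n) - \sum_(k < m * n) (f`_k)%:P * 'X^k.
Proof.
rewrite hornerD hornerN horner_poly hornerXn -exprM (mulnC m n); congr (_ - _).
rewrite -(big_mkord xpredT (fun k => (f`_k)%:P * 'X^k)) big_nat_mul_blocks big_mkord.
apply: eq_bigr => c _; rewrite big_mkord /chunk_poly big_distrl /=.
by apply: eq_bigr => j _; rewrite -mulrA -exprM -exprD mulnC addnC.
Qed.

End Chunks.

Section BlockCompanion.
Variables (R : comNzRingType) (m n : nat) (C : nat -> 'M[R]_m).
Hypotheses (m_gt0 : (0 < m)%N) (n_gt0 : (0 < n)%N).

Definition block_companion_mx : 'M[R]_(m * n) :=
  castmx (sum_const_m m n, sum_const_m m n)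
    (\mxblock_(i < n, j < n)
       (if (i.+1 < n)%N then (if nat_of_ord j == i.+1 then 1%:M else 0) else C j)).

Let mod_ord (k : nat) : 'I_m := Ordinal (ltn_pmod k m_gt0).
Let p := (n.-1 * m)%N.

Let entry (k l : nat) : R :=
  if ((k %/ m).+1 < n)%N then ((l %/ m == (k %/ m).+1) && (k %% m == l %% m))%N%:R
  else C (l %/ m)%N (mod_ord k) (mod_ord l).

Lemma block_companion_mxE (k l : 'I_(m * n)) : block_companion_mx k l = entry k l.
Proof.
rewrite castmxE /mxblock mxE /entry.
have [s1 s2] := tagnat_divmod (cast_ord (esym (sum_const_m m n)) k) m_gt0.
have [t1 t2] := tagnat_divmod (cast_ord (esym (sum_const_m m n)) l) m_gt0.
rewrite /= in s1 s2 t1 t2; rewrite -s1 -t1.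
case: ifP => _; first by case: ifP => _; rewrite mxE // -val_eqE /= s2 t2.
by congr (C _ _ _); apply: val_inj.
Qed.

Lemma ltn_last_block k : (k < p)%N = ((k %/ m).+1 < n)%N.
Proof. by rewrite /p; case: n n_gt0 => // n' _; rewrite -ltn_divLR. Qed.

Lemma divn_last_block k : (p <= k)%N -> (k < m * n)%N -> (k %/ m)%N = n.-1.
Proof.
move=> pk kN; apply/eqP; rewrite eqn_leq leq_divRL // pk andbT.
by rewrite -ltnS prednK // ltn_divLR // mulnC.
Qed.

Lemma mod_ord_block i l : mod_ord ((i * m + l %% m)%N) = mod_ord l.
Proof. by apply: val_inj; rewrite /= modnMDl modn_mod. Qed.

(* The matrix E: the identity, except that its last block column is (X^i I)_i. *)
Let elim_entry (k l : nat) : {poly R} :=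
  if (p <= l)%N then (if (k %% m == l %% m)%N then 'X^(k %/ m) else 0)
  else (k == l)%:R.

Let elim_mx : 'M[{poly R}]_(m * n) := \matrix_(k, l) elim_entry k l.

Let reduced_entry (k l : nat) : {poly R} :=
  'X^n *+ (k %% m == l %% m)%N - \sum_(j < n) (C j (mod_ord k) (mod_ord l))%:P * 'X^j.

Definition block_companion_reduced_mx : 'M[{poly R}]_m :=
  'X^n%:M - \sum_(j < n) 'X^j *: map_mx polyC (C j).

Lemma char_poly_mx_blockE (k l : 'I_(m * n)) :
  char_poly_mx block_companion_mx k l = 'X *+ (k == l :> nat) - (entry k l)%:P.
Proof. by rewrite !mxE block_companion_mxE. Qed.

Lemma char_poly_mx_elimE (k l : 'I_(m * n)) :
  (char_poly_mx block_companion_mx *m elim_mx) k l =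
  if (p <= l)%N then (if (p <= k)%N then reduced_entry k l else 0)
  else char_poly_mx block_companion_mx k l.
Proof.
rewrite mxE; case: (leqP p l) => pl; last first.
  rewrite (bigD1 l) //= [elim_mx l l]mxE /elim_entry leqNgt pl /= eqxx mulr1.
  rewrite big1 ?addr0 //.
  move=> j /negbTE; rewrite [elim_mx j l]mxE /elim_entry leqNgt pl -val_eqE /= => ->.
  by rewrite mulr0.
under eq_bigr => j _ do rewrite char_poly_mx_blockE [elim_mx j l]mxE.
rewrite -(big_mkord xpredT
  (fun j : nat => ('X *+ (k == j :> nat) - (entry k j)%:P) * elim_entry j l)).
pose G i :=
  ('X *+ (k == (i * m + l %% m)%N :> nat) - (entry k (i * m + l %% m)%N)%:P) * 'X^i.
rewrite big_nat_mul_blocks (eq_big_nat _ _ (F2 := G)); last first.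
  move=> i _; rewrite (eq_big_nat _ _ (F2 := fun c => if c == (l %% m)%N then G i else 0)).
    by rewrite -big_mkcond big_nat1_eq ltn_pmod.
  move=> c /andP [_ cm]; rewrite /elim_entry pl modnMDl_small // divnMDl_small //.
  by case: (c =P (l %% m)%N) => [->|]; rewrite ?mulr0.
have kN := ltn_ord k; have km := ltn_pmod k m_gt0.
case: (leqP p k) => pk.
  under eq_bigr => i _ do rewrite /G eqn_block ?ltn_pmod // /entry -ltn_last_block ltnNge pk /=
    mod_ord_block divnMDl_small ?ltn_pmod // mulrBl mulrnAl -exprS.
  rewrite sumrB big_nat_mulrn_eq ?divn_last_block ?prednK ?ltn_predL //.
  rewrite (eq_sym _ (k %% m)%N) /reduced_entry big_mkord.
  by congr (_ - _); apply: eq_bigr => i _; rewrite mulrC.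
under eq_bigr => i _ do rewrite /G eqn_block ?ltn_pmod // /entry -ltn_last_block pk
  divnMDl_small ?ltn_pmod // modnMDl_small ?ltn_pmod // polyC_natr mulrBl mulrnAl
  mulr_natl -exprS.
have kb : ((k %/ m).+1 < n)%N by rewrite -ltn_last_block.
rewrite sumrB !big_nat_mulrn_eq ?(ltn_trans (ltnSn _) kb) //.
by rewrite (eq_sym (k %% m)%N) subrr.
Qed.

Lemma mn_split : (m * n = p + m)%N.
Proof. by rewrite /p -mulSnr prednK // mulnC. Qed.

Lemma det_elim_mx : \det elim_mx = 'X^p.
Proof.
rewrite -det_tr det_trig; last first.
  apply/is_trig_mxP => i j ij; rewrite 2!mxE /elim_entry.
  case: (leqP p i) => pi; last by rewrite (gtn_eqF ij) mulr0n.
  have pj : (p <= j)%N := leq_trans pi (ltnW ij).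
  case: eqP => [ji|_]; last by [].
  have: (j : nat) = i by rewrite (divn_eq j m) (divn_eq i m) ji !divn_last_block.
  by move/eqP; rewrite gtn_eqF.
rewrite (eq_bigr (fun i : 'I_(m * n) => elim_entry i i)); last by move=> i _; rewrite 2!mxE.
rewrite -(big_mkord xpredT (fun i => elim_entry i i)) mn_split.
rewrite (@big_cat_nat _ _ _ p 0 (p + m) _ _ (leq0n p) (leq_addr m p)) /=.
rewrite big1_seq ?mul1r; last first.
  move=> i /andP [_]; rewrite mem_index_iota /elim_entry => /andP [_ /ltn_geF ->].
  by rewrite eqxx.
rewrite (eq_big_nat _ _ (F2 := fun _ => 'X^(n.-1))); last first.
  move=> i /andP [pi iN]; rewrite /elim_entry pi eqxx divn_last_block //.
  by rewrite mn_split.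
by rewrite prodr_const_nat -exprM addKn.
Qed.

Lemma block_companion_reduced_mxE (c d : 'I_m) :
  block_companion_reduced_mx c d = reduced_entry c d.
Proof.
have mod_ord_val (e : 'I_m) : mod_ord e = e by apply: val_inj; rewrite /= modn_small.
rewrite 3!mxE summxE /reduced_entry !mod_ord_val !modn_small // -val_eqE.
congr (_ - _); apply: eq_bigr => j _.
by rewrite 2!mxE mulrC.
Qed.

Lemma det_char_poly_mx_elim :
  \det (char_poly_mx block_companion_mx *m elim_mx) = 'X^p * \det block_companion_reduced_mx.
Proof.
set B := _ *m _.
rewrite -(det_castmx mn_split) -[castmx _ B]submxK.
have -> : ursubmx (castmx (mn_split, mn_split) B) = 0.
  apply/matrixP => i j; rewrite 2!mxE castmxE char_poly_mx_elimE /= leq_addr leqNgt ltn_ord.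
  by rewrite mxE.
rewrite det_lblock; congr (_ * _).
  rewrite -det_tr det_trig; last first.
    apply/is_trig_mxP => i j ij; rewrite 3!mxE castmxE char_poly_mx_elimE /=.
    rewrite (leqNgt p i) (_ : (i < p)%N = true) /=; last exact: ltn_ord.
    rewrite char_poly_mx_blockE /entry -ltn_last_block (_ : (j < p)%N = true) /=;
      last exact: ltn_ord.
    have ji : (i %/ m < (j %/ m).+1)%N by rewrite ltnS leq_div2r // ltnW.
    by rewrite (gtn_eqF ij) (ltn_eqF ji) mulr0n subr0.
  rewrite (eq_bigr (fun _ => 'X)); first by rewrite prodr_const card_ord.
  move=> i _; rewrite 3!mxE castmxE char_poly_mx_elimE /= (leqNgt p i) (ltn_ord i) /=.
  rewrite char_poly_mx_blockE /entry -ltn_last_block (ltn_ord i) eqxx.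
  by rewrite (ltn_eqF (ltnSn _)) mulr0n subr0.
congr (\det _); apply/matrixP => i j.
rewrite 2!mxE castmxE char_poly_mx_elimE /= !leq_addr block_companion_reduced_mxE.
have modp k : ((p + k) %% m = k %% m)%N by rewrite modnMDl.
have mod_ordp k : mod_ord (p + k) = mod_ord k by apply: val_inj; rewrite /= modp.
by rewrite /reduced_entry !modp !mod_ordp.
Qed.

Lemma char_poly_block_companion :
  char_poly block_companion_mx = \det block_companion_reduced_mx.
Proof.
apply: (@monic_lreg _ 'X^p (monicXn _ _)).
by rewrite -det_char_poly_mx_elim det_mulmx det_elim_mx [RHS]mulrC.
Qed.

End BlockCompanion.

Lemma Tmat_block_companion f m n : Tmat f m n = block_companion_mx n (Cmat f m n).
Proof. by []. Qed.

Section BinaryBlockCompanion.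
Variables (f : {poly 'F_2}) (m n : nat).
Hypothesis n_gt0 : (0 < n)%N.

Lemma block_companion_reduced_CmatE (c d : 'I_m) :
  block_companion_reduced_mx n (Cmat f m n) c d =
  'X^n *+ (c == d) - (c == d.+1 :> nat)%:R
    - (if d == m.-1 :> nat then chunk_poly f n c else 0).
Proof.
have CmatE j : Cmat f m n j c d = (j == 0)%N%:R * Rshift m c d + Chat f m n j c d.
  by rewrite /Cmat; case: eqP => _; rewrite ?mxE ?mul1r ?mul0r ?add0r.
rewrite 3!mxE summxE -addrA -opprD; congr (_ - _).
under eq_bigr => j _ do rewrite 2!mxE CmatE polyCD mulrDr.
rewrite big_split /=; congr (_ + _).
  rewrite (bigD1 (Ordinal n_gt0)) //= big1 ?addr0 => [|j /negbTE j_neq0].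
    by rewrite expr0 !mul1r mxE polyC_natr.
  by rewrite -val_eqE /= in j_neq0; rewrite j_neq0 mul0r mulr0.
rewrite /chunk_poly; case: ifP => dm.
  by apply: eq_bigr => j _; rewrite 2!mxE dm mulrC.
by rewrite big1 // => j _; rewrite mxE dm polyC0 mulr0.
Qed.

Lemma det_block_companion_reduced_Cmat :
  \det (block_companion_reduced_mx n (Cmat f m n)) = (chunked_poly f m n).['X^n].
Proof.
set g := chunked_poly f m n.
have e : (size g).-1 = m by rewrite size_chunked_poly.
rewrite -det_tr -(det_sub_companionmx _ (chunked_poly_monic f m n)) -(det_castmx e).
congr (\det _); apply/matrixP => i j.
rewrite castmxE mxE block_companion_reduced_CmatE [RHS]mxE !mxE /=.
have -> : (i == (size g).-2 :> nat) = (i == m.-1 :> nat) by rewrite size_chunked_poly.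
rewrite -val_eqE /= coef_chunked_poly // opprK (eq_sym (j : nat)).
case: (@eqP _ (i : nat) m.-1) => [im|_]; last by rewrite subr0 (eq_sym (j : nat)).
have ji : (j != i.+1 :> nat) by rewrite im prednK ?ltn_eqF // (leq_ltn_trans _ (ltn_ord i)).
by rewrite (negbTE ji) mulr0n subr0.
Qed.

End BinaryBlockCompanion.

Lemma monic_expand (R : nzRingType) (p : {poly R}) N : p \is monic -> size p = N.+1 ->
  p = 'X^N + \sum_(k < N) (p`_k)%:P * 'X^k.
Proof.
move=> /monicP p_monic sp; rewrite -{1}[p]coefK poly_def sp big_ord_recr /= addrC.
congr (_ + _); first by rewrite -[p`_N]/(p`_(N.+1).-1) -sp -/(lead_coef p) p_monic scale1r.
by apply: eq_bigr => k _; rewrite mul_polyC.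
Qed.

Lemma F2_poly_monic (f : {poly 'F_2}) : f != 0 -> f \is monic.
Proof. by rewrite -lead_coef_eq0 monicE; case: (lead_coef f) => [[|[|//]]] ?. Qed.

Lemma char_poly_Tmat (f : {poly 'F_2}) m n :
  (0 < m)%N -> (0 < n)%N -> size f = (m * n).+1 -> char_poly (Tmat f m n) = f.
Proof.
move=> m_gt0 n_gt0 sf.
rewrite Tmat_block_companion char_poly_block_companion // det_block_companion_reduced_Cmat //.
have pchar2 : 2 \in [pchar {poly 'F_2}] by rewrite pchar_poly pchar_Fp.
rewrite horner_chunked_poly (GRing.subr_pchar2 pchar2) -monic_expand //.
by rewrite F2_poly_monic // -size_poly_eq0 sf.
Qed.

Lemma char_poly_irr_expmx_eq1 (F : fieldType) N (A : 'M[F]_N) k :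
  irreducible_poly (char_poly A) -> (A ^+ k == 1) = (char_poly A %| 'X^k - 1).
Proof.
case: N A => [|N] A [size_neq1 char_irr]; first by rewrite size_char_poly in size_neq1.
have minE : mxminpoly A %= char_poly A.
  apply: char_irr; last exact: mxminpoly_dvd_char.
  by rewrite size_mxminpoly eqSS -lt0n mxminpoly_nonconstant.
rewrite -(eqp_dvdl _ minE) -subr_eq0.
have -> : A ^+ k - 1 = horner_mx A ('X^k - 1).
  by rewrite rmorphB rmorphXn /= horner_mx_X rmorph1.
by apply/eqP/mxminpoly_minP.
Qed.

Theorem mainTheorem2 (m n : nat) (f : {poly 'F_2}) :
  (1 <= m)%N -> (1 <= n)%N -> size f = (m * n).+1 ->
  char_poly (Tmat f m n) = f /\
  (primitive_poly f ->
     Tmat f m n \in unitmx /\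
     Tmat f m n ^+ (2 ^ (m * n) - 1) = 1 /\
     (forall k, (0 < k)%N -> (k < 2 ^ (m * n) - 1)%N -> Tmat f m n ^+ k != 1)).
Proof.
move=> m_gt0 n_gt0 sf; have charT := char_poly_Tmat m_gt0 n_gt0 sf; split => //.
case=> f_irr [_ [e_gt0 [f_dvd e_min]]]; rewrite sf /= in e_gt0 f_dvd e_min.
rewrite -charT in f_irr; have expT1 := char_poly_irr_expmx_eq1 _ f_irr.
have T_order : Tmat f m n ^+ (2 ^ (m * n) - 1) = 1 by apply/eqP; rewrite expT1 charT.
split; last split => //.
  have [] := @mulmx1_unit _ _ (Tmat f m n) (Tmat f m n ^+ (2 ^ (m * n) - 1).-1) => //.
  by rewrite mulmxE -exprS prednK.
move=> k k_gt0 k_lt; rewrite expT1 charT; apply/negP => /(e_min k k_gt0).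
by rewrite leqNgt k_lt.
Qed.
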